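(* Let $n$ be a positive integer. Then $V(n,2)\neq\emptyset$ if and only if $n=4k$ or $n=4k+1$ for some positive integer $k$.
   Context: Let $S=K[x_1,\ldots,x_n]$ over a field $K$. $V(n,2)$ is the set of $f$-ideals of $S$ of degree $2$, i.e. square-free monomial ideals $I$ all of whose minimal monomial generators have degree $2$ and which are $f$-ideals. Here, with $\sigma$ the bijection $x_{i_1}\cdots x_{i_k}\mapsto\{i_1,\ldots,i_k\}$ from square-free monomials to subsets of $[n]$, the facet complex $\delta_{\mathcal{F}}(I)$ is the simplicial complex with facets $\sigma(g)$ for $g$ in the minimal generating set $G(I)$, the Stanley–Reisner complex is $\delta_{\mathcal{N}}(I)=\{\sigma(g)\mid g \text{ square-free monomial},\ g\notin I\}$, and $I$ is an $f$-ideal if these two complexes have the same $f$-vector. *)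

From mathcomp Require Import all_boot all_algebra.
Set Implicit Arguments. Unset Strict Implicit. Unset Printing Implicit Defensive.

(* Square-free monomials of S = K[x_1,...,x_n] are identified with subsets of
   [n] = 'I_n via sigma : x_{i1}...x_{ik} |-> {i1,...,ik}.
   A square-free monomial ideal I is encoded by (the sigma-image of) its
   minimal monomial generating set G(I) : {set {set 'I_n}}, an antichain. *)

Definition antichain n (G : {set {set 'I_n}}) : Prop :=
  forall g h, g \in G -> h \in G -> g \subset h -> g = h.

(* The square-free monomial with support F lies in I iff some minimal
   generator divides it. *)
Definition sqfree_in_ideal n (G : {set {set 'I_n}}) (F : {set 'I_n}) : bool :=
  [exists g in G, g \subset F].

Definition facet_complex n (G : {set {set 'I_n}}) : {set {set 'I_n}} :=
  [set F : {set 'I_n} | [exists g in G, F \subset g]].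

Definition SR_complex n (G : {set {set 'I_n}}) : {set {set 'I_n}} :=
  [set F : {set 'I_n} | ~~ sqfree_in_ideal G F].

(* number of faces with k vertices (= f_{k-1}) *)
Definition fcount n (D : {set {set 'I_n}}) (k : nat) : nat :=
  #|[set F in D | #|F| == k]|.

Definition same_fvector n (D1 D2 : {set {set 'I_n}}) : Prop :=
  forall k, fcount D1 k = fcount D2 k.

Definition is_f_ideal n (G : {set {set 'I_n}}) : Prop :=
  same_fvector (facet_complex G) (SR_complex G).

Definition in_V2 n (G : {set {set 'I_n}}) : Prop :=
  antichain G /\ (forall g, g \in G -> #|g| = 2) /\ is_f_ideal G.

From mathcomp Require Import all_boot all_algebra.
From mathcomp Require Import zify.
Set Implicit Arguments. Unset Strict Implicit.

(* If all generators are edges, the facet complex has no face of size > 2, its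
   singletons are the covered vertices and its edges are G, while the
   Stanley-Reisner complex contains every set of size <= 1 and exactly the
   non-edges of size 2.  So equal edge counts give 2 #|G| = C(n,2), i.e.
   4 | n(n-1), and the empty face forces G to be nonempty, so n >= 4.
   Conversely, for n = 4k or 4k+1 split [n] into A of size 2k and its
   complement B, and take all edges inside A, all edges inside B, and k edges
   from one vertex of A to B: this graph has C(n,2)/2 edges and covers every
   vertex, and any three vertices contain two in A or two in B, hence an edge,
   so the Stanley-Reisner complex has no face of size >= 3 either. *)

Lemma bin2_mul2 m : 'C(m, 2) * 2 = m * m.-1.
Proof. by rewrite mulnC -[2]/(1.+1) -mul_bin_diag bin1. Qed.

Lemma card_ord_lt n m : m <= n -> #|[set i : 'I_n | i < m]| = m.
Proof.
move=> le_mn.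
have -> : [set i : 'I_n | i < m] = widen_ord le_mn @: [set: 'I_m].
  apply/setP => i; rewrite inE; apply/idP/imsetP => [lt_im | [[j lt_jm] _ ->] //].
  by exists (Ordinal lt_im) => //; apply/val_inj.
rewrite card_imset ?cardsT ?card_ord //.
by move=> a b /(congr1 val) ab; apply/val_inj.
Qed.

Lemma card_ord_range n a b : a <= b -> b <= n ->
  #|[set i : 'I_n | a <= i < b]| = b - a.
Proof.
move=> le_ab le_bn.
have -> : [set i : 'I_n | a <= i < b] =
          [set i : 'I_n | i < b] :\: [set i : 'I_n | i < a].
  by apply/setP => i; rewrite !inE -leqNgt andbC.
rewrite cardsDS ?card_ord_lt //; first lia.
by apply/subsetP => i; rewrite !inE; lia.
Qed.

Lemma mod4_of_pronic n m : 0 < m -> m * 4 = n * n.-1 ->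
  exists k, 0 < k /\ (n = 4 * k \/ n = 4 * k + 1).
Proof.
move=> m_gt0; rewrite (divn_eq n 4) -subn1.
have : n %% 4 < 4 by rewrite ltn_pmod.
move: (n %/ 4) (n %% 4) => q [|[|[|[|r]]]] // _ e.
- by exists q; split; [case: q e => //; nia | left; lia].
- by exists q; split; [case: q e => //; nia | right; lia].
- exfalso; nia.
- exfalso; nia.
Qed.

Section DegreeTwoComplexes.
Variables (n : nat) (G : {set {set 'I_n}}).
Hypothesis G_edges : forall g, g \in G -> #|g| = 2.

Lemma facet_complex_edges : [set F in facet_complex G | #|F| == 2] = G.
Proof.
apply/setP => F; rewrite !inE; apply/idP/idP.
  case/andP => /existsP [g /andP [gG Fg]] /eqP F2.
  by have /eqP -> : F == g by rewrite eqEcard Fg G_edges // F2.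
by move=> FG; rewrite G_edges // andbT; apply/existsP; exists F; rewrite FG subxx.
Qed.

Lemma SR_complex_edges :
  [set F in SR_complex G | #|F| == 2] = [set F : {set 'I_n} | #|F| == 2] :\: G.
Proof.
apply/setP => F; rewrite !inE /sqfree_in_ideal andbC.
case: eqP => F2; rewrite ?andbF ?andbT //; congr (~~ _); apply/existsP/idP.
  case=> g /andP [gG gF].
  by have /eqP <- : g == F by rewrite eqEcard gF (G_edges gG) F2.
by move=> FG; exists F; rewrite FG subxx.
Qed.

Lemma fcount_edges_eq :
  fcount (facet_complex G) 2 = fcount (SR_complex G) 2 <-> #|G| * 2 = 'C(n, 2).
Proof.
have G_sub : G \subset [set F : {set 'I_n} | #|F| == 2].
  by apply/subsetP => g gG; rewrite inE G_edges.
rewrite /fcount facet_complex_edges SR_complex_edges cardsDS // card_draws card_ord.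
have := subset_leq_card G_sub; rewrite card_draws card_ord.
by split; lia.
Qed.

Lemma SR_complex_small (F : {set 'I_n}) : #|F| <= 1 -> F \in SR_complex G.
Proof.
move=> F_le1; rewrite inE; apply/existsP => -[g /andP [gG /subset_leq_card]].
by rewrite G_edges //; lia.
Qed.

Lemma facet_complex_card_le2 (F : {set 'I_n}) : F \in facet_complex G -> #|F| <= 2.
Proof.
by rewrite inE => /existsP [g /andP [gG Fg]]; rewrite -(G_edges gG) subset_leq_card.
Qed.

Lemma f_ideal_nonempty : is_f_ideal G -> 0 < #|G|.
Proof.
move/(_ 0); rewrite /fcount => e.
have /card_gt0P [F] : 0 < #|[set F in facet_complex G | #|F| == 0]|.
  rewrite e; apply/card_gt0P; exists set0.
  by rewrite in_set cards0 eqxx andbT SR_complex_small ?cards0.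
rewrite !inE => /andP [/existsP [g /andP [gG _]] _].
by apply/card_gt0P; exists g.
Qed.

Lemma f_ideal_of_edges :
  G != set0 ->
  (forall x : 'I_n, exists2 g, g \in G & x \in g) ->
  #|G| * 2 = 'C(n, 2) ->
  (forall F : {set 'I_n}, 2 < #|F| -> exists2 g, g \in G & g \subset F) ->
  is_f_ideal G.
Proof.
move=> /set0Pn [g0 g0G] cover count large j.
have [-> | j_ne2] := eqVneq j 2; first exact/fcount_edges_eq.
rewrite /fcount; apply: eq_card => F; rewrite [in LHS]in_set [in RHS]in_set.
case: eqP => [F_j | _]; rewrite ?andbF // !andbT.
have [F_le1 | F_gt1] := leqP #|F| 1.
  rewrite SR_complex_small // inE; apply/existsP.
  move: F_le1; rewrite leq_eqVlt ltnS leqn0.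
  case/orP => [/cards1P [x ->] | /eqP/cards0_eq ->].
    by have [g gG xg] := cover x; exists g; rewrite gG sub1set.
  by exists g0; rewrite g0G sub0set.
have F_gt2 : 2 < #|F| by move: j_ne2; rewrite -F_j; lia.
have [g gG gF] := large F F_gt2.
apply/idP/idP => [/facet_complex_card_le2 | ]; first lia.
rewrite [_ \in SR_complex _]inE => /negP []; apply/existsP; exists g; by rewrite gG.
Qed.

End DegreeTwoComplexes.

Lemma in_V2_mod4 n (G : {set {set 'I_n}}) : in_V2 G ->
  exists k, 0 < k /\ (n = 4 * k \/ n = 4 * k + 1).
Proof.
case=> _ [G_edges f_ideal].
have count := (fcount_edges_eq G_edges).1 (f_ideal 2).
apply: (mod4_of_pronic (f_ideal_nonempty G_edges f_ideal)).
by rewrite -bin2_mul2 -count; lia.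
Qed.

Section EdgesWithin.
Variable T : finType.

Definition edges_within (S : {set T}) : {set {set T}} :=
  [set g : {set T} | g \subset S & #|g| == 2].

Lemma card_edges_within (S : {set T}) : #|edges_within S| = 'C(#|S|, 2).
Proof. exact: cards_draws. Qed.

Lemma edges_within_disjoint (S S' : {set T}) :
  [disjoint S & S'] -> edges_within S :&: edges_within S' = set0.
Proof.
rewrite -setI_eq0 => /eqP SS'0; apply/setP => g; rewrite !inE.
apply/negP => /andP [/andP [gS /eqP g2] /andP [gS' _]].
have : g \subset S :&: S' by rewrite subsetI gS.
by rewrite SS'0 subset0 => /eqP g0; rewrite g0 cards0 in g2.
Qed.

Lemma pair_edges_within (S : {set T}) x y :
  x \in S -> y \in S -> x != y -> [set x; y] \in edges_within S.
Proof.
move=> xS yS xy; rewrite inE cards2 xy andbT.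
by apply/subsetP => z; rewrite !inE => /orP [] /eqP ->.
Qed.

Lemma edge_within_sub (S F : {set T}) : 1 < #|S :&: F| ->
  exists2 g, g \in edges_within S & g \subset F.
Proof.
case/card_gt1P => x [y [xSF ySF xy]].
move: xSF ySF; rewrite !inE => /andP [xS xF] /andP [yS yF].
exists [set x; y]; first exact: pair_edges_within.
by apply/subsetP => z; rewrite !inE => /orP [] /eqP ->.
Qed.

Lemma edge_within_through (S : {set T}) x : x \in S -> 1 < #|S| ->
  exists2 g, g \in edges_within S & x \in g.
Proof.
move=> xS S_gt1.
have /set0Pn [y /setD1P [yx yS]] : S :\ x != set0.
  by rewrite -card_gt0; move: S_gt1; rewrite (cardsD1 x) xS.
by exists [set x; y]; rewrite ?set21 // pair_edges_within // eq_sym.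
Qed.

End EdgesWithin.

Section Construction.
Variables (n k : nat).
Hypotheses (n_gt0 : 0 < n) (k_gt0 : 0 < k) (n_eq : n = 4 * k \/ n = 4 * k + 1).

Definition hub : 'I_n := Ordinal n_gt0.
Definition left_half : {set 'I_n} := [set i : 'I_n | i < 2 * k].
Definition hub_targets : {set 'I_n} := [set i : 'I_n | 2 * k <= i < 3 * k].
Definition hub_star : {set {set 'I_n}} := [set [set hub; b] | b in hub_targets].
Definition split_graph : {set {set 'I_n}} :=
  edges_within left_half :|: edges_within (~: left_half) :|: hub_star.

Lemma card_left_half : #|left_half| = 2 * k.
Proof. by rewrite card_ord_lt //; case: n_eq => ->; lia. Qed.

Lemma card_right_half : #|~: left_half| = n - 2 * k.
Proof. by rewrite cardsCs setCK card_ord card_left_half. Qed.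

Lemma card_hub_targets : #|hub_targets| = k.
Proof. by rewrite card_ord_range; [lia | lia | case: n_eq => ->; lia]. Qed.

Lemma hub_left : hub \in left_half.
Proof. by rewrite inE /=; lia. Qed.

Lemma hub_targets_right b : b \in hub_targets -> b \notin left_half.
Proof. by rewrite !inE -leqNgt => /andP []. Qed.

Lemma hub_neq_target b : b \in hub_targets -> hub != b.
Proof. by move/hub_targets_right; apply: contraNneq => <-; exact: hub_left. Qed.

Lemma card_hub_star : #|hub_star| = k.
Proof.
rewrite card_in_imset ?card_hub_targets // => b1 b2 b1T b2T e.
have : b1 \in [set hub; b2] by rewrite -e set22.
by rewrite !inE [b1 == _]eq_sym (negbTE (hub_neq_target b1T)) => /eqP.
Qed.

Lemma split_graph_edges g : g \in split_graph -> #|g| = 2.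
Proof.
rewrite !inE => /orP [/orP [] /andP [_ /eqP //] | /imsetP [b bT ->]].
by rewrite cards2 hub_neq_target.
Qed.

Lemma halves_disjoint_star :
  (edges_within left_half :|: edges_within (~: left_half)) :&: hub_star = set0.
Proof.
apply/setP => g; rewrite in_setI in_set0; apply/negP => /andP [].
case/setUP; rewrite inE => /andP [g_sub _] /imsetP [b /hub_targets_right bR g_eq];
  by move: g_sub; rewrite g_eq subUset !sub1set ?in_setC hub_left (negbTE bR) ?andbF.
Qed.

Lemma card_split_graph : #|split_graph| * 2 = 'C(n, 2).
Proof.
rewrite cardsU halves_disjoint_star cardsU edges_within_disjoint; last first.
  by rewrite disjoints_subset setCK.
rewrite !cards0 !subn0 card_hub_star !card_edges_within card_left_half card_right_half.
have := bin2_mul2 (2 * k); have := bin2_mul2 (n - 2 * k); have := bin2_mul2 n.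
by rewrite -!subn1; case: n_eq => ->; nia.
Qed.

Lemma split_graph_cover x : exists2 g, g \in split_graph & x \in g.
Proof.
have [xL | xR] := boolP (x \in left_half).
  have [|g gE xg] := edge_within_through xL; first by rewrite card_left_half; lia.
  by exists g; rewrite // !in_setU gE.
rewrite -in_setC in xR.
have [|g gE xg] := edge_within_through xR.
  by rewrite card_right_half; case: n_eq => ->; lia.
by exists g; rewrite // !in_setU gE orbT.
Qed.

Lemma split_graph_large (F : {set 'I_n}) : 2 < #|F| ->
  exists2 g, g \in split_graph & g \subset F.
Proof.
move=> F_gt2; have := cardsID left_half F; rewrite setDE setIC [F :&: _]setIC.
have [L_gt1 _ | L_le1 R_split] := ltnP 1 #|left_half :&: F|.
  by have [g gE gF] := edge_within_sub L_gt1; exists g; rewrite // !in_setU gE.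
have [|g gE gF] := @edge_within_sub _ (~: left_half) F; first lia.
by exists g; rewrite // !in_setU gE orbT.
Qed.

Lemma split_graph_in_V2 : in_V2 split_graph.
Proof.
split; [|split; first exact: split_graph_edges].
  move=> g h gG hG gh; apply/eqP.
  by rewrite eqEcard gh (split_graph_edges gG) (split_graph_edges hG).
apply: f_ideal_of_edges split_graph_edges _ split_graph_cover card_split_graph
  split_graph_large.
by apply/set0Pn; have [g gG _] := split_graph_cover hub; exists g.
Qed.

End Construction.

Theorem proposition3p3 (K : fieldType) (n : nat) (hn : 0 < n) :
  (exists G : {set {set 'I_n}}, in_V2 G) <->
  (exists k : nat, 0 < k /\ (n = 4 * k \/ n = 4 * k + 1)).
Proof.
split=> [[G /in_V2_mod4] //| [k [k_gt0 n_eq]]].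
by exists (@split_graph n k hn); exact: split_graph_in_V2.
Qed.
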